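(* Let $\alpha,\tilde\alpha,\beta,\gamma\in\mathbb{R}$ and let $f\colon\mathbb{R}^4\to\mathbb{R}^4$ be defined by \[ f(x,y,z,\omega)=\big(y,\ \alpha x+\beta z+\gamma\sin(x),\ \omega,\ \tilde\alpha x-\beta z-\gamma\sin(x)\big). \] If $\tilde\alpha=-\alpha$ and $\beta\neq0$, then $f$ is not topologically transitive.
   Context: A map $f\colon\mathbb{R}^k\to\mathbb{R}^k$ is topologically transitive if for all (nonempty) open sets $V,W\subset\mathbb{R}^k$ there exists $n\ge1$ such that $V\cap f^{(n)}(W)\neq\emptyset$, where $f^{(n)}$ denotes the $n$-th iterate. *)

From Stdlib Require Import Reals.
Open Scope R_scope.

Definition R4 : Type := (R * R * R * R)%type.

(* open-box neighbourhood of radius e around p (generates the Euclidean topology) *)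
Definition near4 (p q : R4) (e : R) : Prop :=
  let '(p1, p2, p3, p4) := p in
  let '(q1, q2, q3, q4) := q in
  Rabs (q1 - p1) < e /\ Rabs (q2 - p2) < e /\ Rabs (q3 - p3) < e /\ Rabs (q4 - p4) < e.

Definition open4 (V : R4 -> Prop) : Prop :=
  forall p, V p -> exists e, 0 < e /\ forall q, near4 p q e -> V q.

Fixpoint iter4 (n : nat) (f : R4 -> R4) (x : R4) : R4 :=
  match n with O => x | S k => f (iter4 k f x) end.

Definition top_transitive (f : R4 -> R4) : Prop :=
  forall V W : R4 -> Prop, open4 V -> open4 W ->
    (exists v, V v) -> (exists w, W w) ->
    exists n : nat, (1 <= n)%nat /\ exists w, W w /\ V (iter4 n f w).

Definition fmap (alpha alpha' beta gamma : R) (p : R4) : R4 :=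
  let '(x, y, z, w) := p in
  (y, alpha * x + beta * z + gamma * sin x, w, alpha' * x - beta * z - gamma * sin x).

(* When alpha' = - alpha, the second and fourth coordinates of f p always sum
   to 0, so f maps R^4 into the hyperplane y + w = 0. Every iterate f^(n) with
   n >= 1 then misses the nonempty open half-space y + w > 1, which rules out
   transitivity. *)
From Stdlib Require Import Reals Lra Lia.
Open Scope R_scope.

Definition yw_sum (p : R4) : R := let '(_, y, _, w) := p in y + w.

Lemma fmap_yw_sum (alpha beta gamma : R) (p : R4) :
  yw_sum (fmap alpha (- alpha) beta gamma p) = 0.
Proof. destruct p as [[[x y] z] w]; simpl; ring. Qed.

Lemma open4_setT : open4 (fun _ => True).
Proof. intros p _; exists 1; split; [lra | auto]. Qed.

Lemma open4_yw_sum_gt (c : R) : open4 (fun p => c < yw_sum p).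
Proof.
  intros [[[x y] z] w] Hp; simpl in Hp.
  exists ((y + w - c) / 2); split; [lra |].
  intros [[[x' y'] z'] w'] [_ [Hy [_ Hw]]]; simpl.
  apply Rabs_def2 in Hy; apply Rabs_def2 in Hw; lra.
Qed.

Lemma not_top_transitive_of_range_avoids_open (f : R4 -> R4) (V : R4 -> Prop) :
  open4 V -> (exists v, V v) -> (forall p, ~ V (f p)) -> ~ top_transitive f.
Proof.
  intros HV [v Hv] Hf Htr.
  destruct (Htr V (fun _ => True) HV open4_setT (ex_intro _ v Hv)
              (ex_intro _ v I)) as [n [Hn [w [_ Hw]]]].
  destruct n as [| k]; [lia |].
  exact (Hf (iter4 k f w) Hw).
Qed.

Theorem proposition1 (alpha alpha' beta gamma : R) :
  alpha' = - alpha -> beta <> 0 ->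
  ~ top_transitive (fmap alpha alpha' beta gamma).
Proof.
  intros -> _.
  apply (not_top_transitive_of_range_avoids_open _ (fun p => 1 < yw_sum p)).
  - apply open4_yw_sum_gt.
  - exists (0, 2, 0, 0); simpl; lra.
  - intro p; rewrite fmap_yw_sum; lra.
Qed.
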